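(* The Levi graph $LG_2$ has no proper distinguishing monochromatic $3$-coloring.
   Context: Let $V=\mathbb{F}_2^3$; $LG_2$ is the bipartite graph whose vertices are the $1$-dimensional subspaces (''points'') and the $2$-dimensional subspaces (''lines'') of $V$, a point being adjacent to a line iff it is contained in it. A coloring of $LG_2$ is monochromatic if all points receive the same color or all lines receive the same color. A coloring is distinguishing if the only graph automorphism mapping every color class onto itself is the identity. *)

From HB Require Import structures.
From mathcomp Require Import all_boot all_order all_algebra all_fingroup.
Set Implicit Arguments. Unset Strict Implicit. Unset Printing Implicit Defensive.
Import GRing.Theory.
Local Open Scope ring_scope.

(* V = F_2^3 as row vectors; a subspace of V is represented by its canonical
   generating matrix A : 'M['F_2]_3 with <<A>> = A (mxalgebra's genmx),
   and its dimension is \rank A. *)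

Definition is_LG2_vertex (A : 'M['F_2]_3) : bool :=
  ((<<A>>)%MS == A) && ((\rank A == 1%N) || (\rank A == 2%N)).

Definition LG2 := {A : 'M['F_2]_3 | is_LG2_vertex A}.

Definition is_point (v : LG2) : bool := \rank (val v) == 1%N.
Definition is_line (v : LG2) : bool := \rank (val v) == 2%N.

Definition incident (p l : LG2) : bool :=
  [&& is_point p, is_line l & (val p <= val l)%MS].

Definition LG2_adj (u v : LG2) : bool := incident u v || incident v u.

Definition LG2_aut (f : {perm LG2}) : Prop :=
  forall u v, LG2_adj (f u) (f v) = LG2_adj u v.

Definition proper_coloring k (c : LG2 -> 'I_k) : Prop :=
  forall u v, LG2_adj u v -> c u != c v.

Definition monochromatic_coloring k (c : LG2 -> 'I_k) : Prop :=
  (forall p q, is_point p -> is_point q -> c p = c q) \/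
  (forall l m, is_line l -> is_line m -> c l = c m).

Definition preserves_colors k (c : LG2 -> 'I_k) (f : {perm LG2}) : Prop :=
  forall v, c (f v) = c v.

Definition distinguishing_coloring k (c : LG2 -> 'I_k) : Prop :=
  forall f : {perm LG2}, LG2_aut f -> preserves_colors c f -> f = 1%g.

From HB Require Import structures.
From mathcomp Require Import all_boot all_order all_algebra all_fingroup.
Set Implicit Arguments. Unset Strict Implicit. Unset Printing Implicit Defensive.
Import GRing.Theory.
Local Open Scope ring_scope.

(* GL_3(F_2), of order 168, acts faithfully on LG_2 by automorphisms.  In a
   proper monochromatic 3-coloring one side of the bipartition (say the points)
   has a single color c0, so every vertex of the other side, being adjacent to
   it, avoids c0.  That side has 7 vertices and only two colors left, hence at
   most 2^7 = 128 color patterns, fewer than 168: two distinct g, h move the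
   coloring to the same pattern, and g^-1 h is a nontrivial color-preserving
   automorphism. *)

Definition GL3 := {'GL_3['F_2]}.
Definition nzvec := {v : 'rV['F_2]_3 | v != 0}.

Lemma card_nzvec : #|{: nzvec}| = 7%N.
Proof. by rewrite card_sig cardC1 card_mx card_Fp. Qed.

Lemma card_GL3 : #|{: GL3}| = 168%N.
Proof.
have := card_GL 'F_2 (isT : (0 < 3)%N); rewrite /GLgroup cardsT => ->.
by rewrite card_Fp // big_ltn // big_ltn // big_ltn // big_geq.
Qed.

Lemma genmx_LG2_vertex m (A : 'M['F_2]_(m, 3)) :
  (\rank A == 1%N) || (\rank A == 2%N) -> is_LG2_vertex <<A>>%MS.
Proof. by rewrite /is_LG2_vertex genmx_id eqxx mxrank_gen. Qed.

Lemma LG2_rank (v : LG2) : (\rank (val v) == 1%N) || (\rank (val v) == 2%N).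
Proof. by case/andP: (valP v). Qed.

Lemma genmx_LG2 (v : LG2) : <<val v>>%MS = val v.
Proof. by case/andP: (valP v) => /eqP. Qed.

Lemma is_pointN_line v : is_point v = ~~ is_line v.
Proof. by rewrite /is_point /is_line; case/orP: (LG2_rank v) => /eqP ->. Qed.

Lemma genmx_eq_LG2 (v : LG2) m (A : 'M_(m, 3)) : (A == val v)%MS -> <<A>>%MS = val v.
Proof. by move=> /genmxP ->; exact: genmx_LG2. Qed.

Lemma row_free_GL3 (g : GL3) : row_free (GLval g).
Proof. by rewrite row_free_unit; exact: GL_unit. Qed.

Lemma LG2_act_subproof (g : GL3) (v : LG2) : is_LG2_vertex <<val v *m GLval g>>%MS.
Proof.
by apply: genmx_LG2_vertex; rewrite mxrankMfree ?LG2_rank ?row_free_GL3.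
Qed.

Definition LG2_actf (g : GL3) (v : LG2) : LG2 := Sub _ (LG2_act_subproof g v).

Lemma LG2_actf_inj g : injective (LG2_actf g).
Proof.
move=> u v /(congr1 val)/genmxP; rewrite !submxMfree ?row_free_GL3 //.
by move=> /genmxP; rewrite !genmx_LG2 => /val_inj.
Qed.

Definition LG2_act (g : GL3) : {perm LG2} := perm (@LG2_actf_inj g).

Lemma LG2_actE g v : val (LG2_act g v) = <<val v *m GLval g>>%MS.
Proof. by rewrite permE. Qed.

Lemma rank_LG2_act g v : \rank (val (LG2_act g v)) = \rank (val v).
Proof. by rewrite LG2_actE mxrank_gen mxrankMfree ?row_free_GL3. Qed.

Lemma is_point_act g v : is_point (LG2_act g v) = is_point v.
Proof. by rewrite /is_point rank_LG2_act. Qed.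

Lemma is_line_act g v : is_line (LG2_act g v) = is_line v.
Proof. by rewrite /is_line rank_LG2_act. Qed.

Lemma incident_act g u v : incident (LG2_act g u) (LG2_act g v) = incident u v.
Proof.
by rewrite /incident is_point_act is_line_act !LG2_actE !genmxE submxMfree ?row_free_GL3.
Qed.

Lemma LG2_act_aut g : LG2_aut (LG2_act g).
Proof. by move=> u v; rewrite /LG2_adj !incident_act. Qed.

Lemma LG2_act1 v : LG2_act 1%g v = v.
Proof. by apply: val_inj; rewrite LG2_actE GL_1E mulmx1 genmx_LG2. Qed.

Lemma LG2_actM g h v : LG2_act (g * h)%g v = LG2_act h (LG2_act g v).
Proof.
apply: val_inj; rewrite !LG2_actE GL_MxE mulmxA.
by apply/eq_genmx/eqmxMr/eqmx_sym/genmxE.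
Qed.

Lemma point_of_subproof (x : nzvec) : is_LG2_vertex <<val x>>%MS.
Proof. by apply: genmx_LG2_vertex; rewrite rank_rV (valP x). Qed.

Lemma rank_kermx_tr (x : nzvec) : \rank (kermx (val x)^T) = 2%N.
Proof. by rewrite mxrank_ker mxrank_tr rank_rV (valP x). Qed.

Lemma line_of_subproof (x : nzvec) : is_LG2_vertex <<kermx (val x)^T>>%MS.
Proof. by apply: genmx_LG2_vertex; rewrite rank_kermx_tr. Qed.

Definition point_of (x : nzvec) : LG2 := Sub _ (point_of_subproof x).

Definition line_of (x : nzvec) : LG2 := Sub _ (line_of_subproof x).

Lemma is_point_of x : is_point (point_of x).
Proof. by rewrite /is_point /= mxrank_gen rank_rV (valP x). Qed.

Lemma is_line_of x : is_line (line_of x).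
Proof. by rewrite /is_line /= mxrank_gen rank_kermx_tr. Qed.

Lemma incident_point_line_of x y :
  incident (point_of x) (line_of y) = (val x *m (val y)^T == 0).
Proof. by rewrite /incident is_point_of is_line_of /= !genmxE; apply/sub_kermxP/eqP. Qed.

Lemma exists_annihilator m (A : 'M['F_2]_(m, 3)) :
  (\rank A < 3)%N -> exists y : nzvec, A *m (val y)^T = 0.
Proof.
move=> rA; have : kermx A^T != 0 by rewrite -mxrank_eq0 mxrank_ker mxrank_tr subn_eq0 -ltnNge.
case/rowV0Pn => y /sub_kermxP yA nzy; exists (Sub y nzy).
by apply: trmx_inj; rewrite trmx_mul trmxK yA trmx0.
Qed.

Lemma point_of_surj p : is_point p -> exists x, point_of x = p.
Proof.
move=> /eqP rp; have : val p != 0 by rewrite -mxrank_eq0 rp.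
case/rowV0Pn => x sxp nzx; exists (Sub x nzx); apply/val_inj/genmx_eq_LG2.
by rewrite -(mxrank_leqif_eq sxp) rp rank_rV nzx.
Qed.

Lemma line_of_surj l : is_line l -> exists y, line_of y = l.
Proof.
move=> /eqP rl; have [|y ly] := exists_annihilator (A := val l); first by rewrite rl.
exists y; apply/val_inj/genmx_eq_LG2.
have slk : (val l <= kermx (val y)^T)%MS by apply/sub_kermxP.
by rewrite slk andbT -(mxrank_leqif_sup slk) rl rank_kermx_tr.
Qed.

Lemma point_on_line p : is_point p -> exists y, incident p (line_of y).
Proof.
case/point_of_surj => x <-; have [|y xy] := exists_annihilator (A := val x).
  by rewrite rank_rV (valP x).
by exists y; rewrite incident_point_line_of xy.
Qed.

Lemma line_through_point l : is_line l -> exists x, incident (point_of x) l.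
Proof.
case/line_of_surj => y <-; have [|x yx] := exists_annihilator (A := val y).
  by rewrite rank_rV (valP y).
exists x; rewrite incident_point_line_of; apply/eqP/trmx_inj.
by rewrite trmx_mul trmxK yx trmx0.
Qed.

Lemma LG2_act_fixed_point g x :
  LG2_act g (point_of x) = point_of x -> val x *m GLval g = val x.
Proof.
move/(congr1 val); rewrite LG2_actE /= => /genmxP/andP[+ _].
rewrite (eqmxMr _ (genmxE _)) => /sub_rVP[a xg].
have nz_a : a != 0.
  apply: contraTneq (valP x) => a0; rewrite -mxrank_eq0 -(mxrankMfree _ (row_free_GL3 g)).
  by rewrite xg a0 scale0r mxrank0.
have a1 : a = 1.
  by move: nz_a {xg}; case: a => [[|[|[]]] ?] //= _; apply: val_inj.
by rewrite xg a1 scale1r.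
Qed.

Lemma LG2_act_eq1 g : LG2_act g = 1%g -> g = 1%g.
Proof.
move=> g1; apply/val_inj/row_matrixP => i; rewrite /= !rowE mulmx1.
have [->|nz_ei] := eqVneq (delta_mx 0 i : 'rV['F_2]_3) 0; first by rewrite mul0mx.
by apply: (LG2_act_fixed_point (x := exist (fun v => v != 0) _ nz_ei)); rewrite g1 perm1.
Qed.

Definition other_color (c0 : 'I_3) : 'I_3 := if c0 == ord0 then inord 1 else ord0.

Lemma eq_colors_avoiding (c0 x y : 'I_3) :
  x != c0 -> y != c0 -> (x == other_color c0) = (y == other_color c0) -> x = y.
Proof.
rewrite /other_color.
case: x => [[|[|[|?]]] ?] //; case: y => [[|[|[|?]]] ?] //;
case: c0 => [[|[|[|?]]] ?] //; rewrite /eq_op /= ?inordK //=;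
by move=> *; apply: val_inj.
Qed.

Lemma exists_color_preserving_act (T : pred LG2) (par : nzvec -> LG2)
    (c : LG2 -> 'I_3) (c0 : 'I_3) :
  (forall g v, T (LG2_act g v) = T v) -> (forall v, T v -> exists x, par x = v) ->
  (forall v, ~~ T v -> c v = c0) -> (forall v, T v -> c v != c0) ->
  exists2 g, LG2_act g != 1%g & preserves_colors c (LG2_act g).
Proof.
move=> T_act par_onto cNT cT.
pose pattern (g : GL3) := [ffun x => c (LG2_act g (par x)) == other_color c0].
have /injectivePn[g [h neq_gh same_pattern]] : ~~ injectiveb pattern.
  apply/injectiveP => /leq_card.
  by rewrite card_ffun card_bool card_nzvec card_GL3.
exists (g^-1 * h)%g.
  apply: contra neq_gh => /eqP/LG2_act_eq1 gh1.
  by rewrite -(mulKVg g h) gh1 mulg1.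
move=> v; rewrite LG2_actM; have [Tv | nTv] := boolP (T v); last first.
  by rewrite !cNT // !T_act.
have [x par_x] : exists x, par x = LG2_act g^-1%g v by apply: par_onto; rewrite T_act.
have /ffunP/(_ x) := same_pattern; rewrite !ffunE par_x => same_x.
rewrite (eq_colors_avoiding _ _ (esym same_x)) ?cT ?T_act //.
by rewrite -LG2_actM mulVg LG2_act1.
Qed.

Theorem mainTheorem14 :
  ~ (exists c : LG2 -> 'I_3,
        [/\ proper_coloring c, distinguishing_coloring c & monochromatic_coloring c]).
Proof.
case=> c [proper dist mono].
have no_witness g : LG2_act g != 1%g -> ~ preserves_colors c (LG2_act g).
  by move=> /eqP + pc; apply; apply: dist pc; exact: LG2_act_aut.
have /card_gt0P[x0 _] : (0 < #|{: nzvec}|)%N by rewrite card_nzvec.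
case: mono => [cP | cL].
- have cL l : is_line l -> c l != c (point_of x0).
    case/line_through_point => x inc_xl.
    rewrite (cP _ _ (is_point_of x0) (is_point_of x)) eq_sym.
    by apply: proper; rewrite /LG2_adj inc_xl.
  have cNL v : ~~ is_line v -> c v = c (point_of x0).
    by rewrite -is_pointN_line => /cP; apply; exact: is_point_of.
  have [g] := exists_color_preserving_act is_line_act line_of_surj cNL cL.
  exact: no_witness.
- have cP p : is_point p -> c p != c (line_of x0).
    case/point_on_line => y inc_py.
    rewrite (cL _ _ (is_line_of x0) (is_line_of y)).
    by apply: proper; rewrite /LG2_adj inc_py.
  have cNP v : ~~ is_point v -> c v = c (line_of x0).
    by rewrite is_pointN_line negbK => /cL; apply; exact: is_line_of.
  have [g] := exists_color_preserving_act is_point_act point_of_surj cNP cP.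
  exact: no_witness.
Qed.
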